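(* Let $f\in P_k^n$, let $N\in Sep(f)$, and let $x_1,\dots,x_m$ be essential variables of $f$. Suppose there exist constants $c_1,\dots,c_m\in Z_k$ such that $N\cap Ess(f(x_i=c_i))=\emptyset$ for every $i=1,\dots,m$. Then $M\cup N\in Sep(f)$ for every nonempty $M\subseteq\{x_1,\dots,x_m\}$.
   Context: $Z_k=\{0,1,\dots,k-1\}$, $k\ge2$; $P_k^n$ is the set of all maps $f:Z_k^n\to Z_k$ in the variables $x_1,\dots,x_n$. A variable $x_i$ is essential in $f$ if there are $a_1,\dots,a_n,b\in Z_k$ with $f(a_1,\dots,a_i,\dots,a_n)\ne f(a_1,\dots,a_{i-1},b,a_{i+1},\dots,a_n)$; $Ess(f)$ is the set of essential variables. For an essential $x_i$ and $c\in Z_k$, $f(x_i=c)$ is the function obtained by assigning $c$ to $x_i$; $f\succ g$ means $g=f(x_i=c)$ for some essential $x_i$ and $c$, and $\succeq$ is the reflexive-transitive closure of $\succ$ (the elements $g$ with $f\succeq g$ are the subfunctions of $f$). A nonempty set $M\subseteq Ess(f)$ is separable in $f$ if $M=Ess(g)$ for some $g$ with $f\succeq g$; $Sep(f)$ is the set of separable sets of $f$. *)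

(* Z_k = 'I_k (with 2 <= k as hypothesis), variables x_1..x_n = 'I_n. *)
From mathcomp Require Import all_boot.
Set Implicit Arguments. Unset Strict Implicit. Unset Printing Implicit Defensive.

Definition tup (k n : nat) := {ffun 'I_n -> 'I_k}.
Definition fn (k n : nat) := {ffun tup k n -> 'I_k}.

Definition upd k n (a : tup k n) (i : 'I_n) (b : 'I_k) : tup k n :=
  [ffun j => if j == i then b else a j].

Definition essential k n (f : fn k n) (i : 'I_n) : bool :=
  [exists a : tup k n, exists b : 'I_k, f a != f (upd a i b)].

Definition Ess k n (f : fn k n) : {set 'I_n} := [set i | essential f i].

Definition assign k n (f : fn k n) (i : 'I_n) (c : 'I_k) : fn k n :=
  [ffun a => f (upd a i c)].

Definition succ1 k n (f g : fn k n) : Prop :=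
  exists i c, i \in Ess f /\ g = assign f i c.

Inductive subfun k n (f : fn k n) : fn k n -> Prop :=
  | subfun_refl : subfun f f
  | subfun_step g h : subfun f g -> succ1 g h -> subfun f h.

Definition separable k n (f : fn k n) (M : {set 'I_n}) : Prop :=
  M != set0 /\ M \subset Ess f /\ exists g, subfun f g /\ M = Ess g.

From mathcomp Require Import all_boot.
Set Implicit Arguments. Unset Strict Implicit. Unset Printing Implicit Defensive.

(* Every subfunction g of f is f with the variables outside Ess g frozen to
   suitable constants d.  Freeze instead only the variables outside M ∪ N to
   get g'; then g is g' with M \ N frozen, so N ⊆ Ess g' ⊆ M ∪ N.  If some
   x_i in M \ N were inessential in g', freezing it to c_i would not change
   g', and g would be a subfunction of f(x_i = c_i), forcing the nonempty N
   into Ess (f(x_i = c_i)), which it misses.  Hence Ess g' = M ∪ N. *)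

Section Restriction.
Variables k n : nat.
Implicit Types (f g : fn k n) (d : tup k n) (P Q : {set 'I_n}).

Definition restr f P d : fn k n :=
  [ffun a : tup k n => f [ffun j => if j \in P then d j else a j]].

Lemma restr_comp f P Q d : restr (restr f P d) Q d = restr f (P :|: Q) d.
Proof.
apply/ffunP => a; rewrite !ffunE; congr (f _); apply/ffunP => j.
by rewrite !ffunE in_setU; case: (j \in P); case: (j \in Q).
Qed.

Lemma restr_set0 f d : restr f set0 d = f.
Proof.
apply/ffunP => a; rewrite ffunE; congr (f _).
by apply/ffunP => j; rewrite ffunE inE.
Qed.

Lemma restr_set1 f i d : restr f [set i] d = assign f i (d i).
Proof.
apply/ffunP => a; rewrite !ffunE; congr (f _).
by apply/ffunP => j; rewrite !ffunE inE; case: eqP => [->|].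
Qed.

Lemma assign_restr f P d i c :
  i \notin P -> assign (restr f P d) i c = restr (assign f i c) P d.
Proof.
move=> iNP; apply/ffunP => a; rewrite !ffunE; congr (f _); apply/ffunP => j.
by rewrite !ffunE; case: eqP => [->|]; rewrite ?(negbTE iNP).
Qed.

Lemma assign_id g i c : i \notin Ess g -> assign g i c = g.
Proof.
rewrite inE => /existsPn iNE; apply/ffunP => a; rewrite ffunE.
by apply/eqP; move/existsPn/(_ c): (iNE a); rewrite negbK eq_sym.
Qed.

Lemma subfun_assign f g i c : subfun f g -> subfun f (assign g i c).
Proof.
move=> fg; have [iE | iNE] := boolP (i \in Ess g).
  by apply: subfun_step fg _; exists i, c.
by rewrite assign_id.
Qed.

Lemma subfun_restr f P d : subfun f (restr f P d).
Proof.
rewrite -(set_enum P); elim: (enum P) => [|i s IH].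
  by rewrite set_nil restr_set0; apply: subfun_refl.
by rewrite set_cons setUC -restr_comp restr_set1; apply: subfun_assign.
Qed.

Lemma restr_id g P d : P \subset ~: Ess g -> restr g P d = g.
Proof.
rewrite -(set_enum P); elim: (enum P) => [|i s IH]; first by rewrite set_nil restr_set0.
rewrite set_cons subUset sub1set inE => /andP[iNE sNE].
by rewrite -restr_comp restr_set1 assign_id // IH.
Qed.

Lemma Ess_restr f P d : Ess (restr f P d) \subset Ess f :\: P.
Proof.
apply/subsetP => i; rewrite !inE /essential => /existsP[a /existsP[b]].
rewrite !ffunE; have [iP | iNP] := boolP (i \in P).
  set u := [ffun _ => _]; set v := [ffun _ => _]; suff -> : u = v by rewrite eqxx.
  by apply/ffunP => j; rewrite !ffunE; case: eqP => [->|]; rewrite ?iP.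
move=> neq; apply/existsP; exists [ffun j => if j \in P then d j else a j].
apply/existsP; exists b; move: neq; congr (_ != f _); apply/ffunP => j.
by rewrite !ffunE; case: eqP => [->|]; rewrite ?(negbTE iNP).
Qed.

Lemma Ess_restr_sub f P d : Ess (restr f P d) \subset Ess f.
Proof. exact: subset_trans (Ess_restr f P d) (subsetDl _ _). Qed.

Lemma subfun_exists_restr f g d0 : subfun f g -> exists S d, g = restr f S d.
Proof.
elim => [|g' h _ [S [d ->]] [i [c [iE ->]]]].
  by exists set0, d0; rewrite restr_set0.
have iNS : i \notin S by move/subsetP/(_ i iE): (Ess_restr f S d); rewrite inE => /andP[].
exists (i |: S), (upd d i c); apply/ffunP => a; rewrite !ffunE; congr (f _).
by apply/ffunP => j; rewrite !ffunE !inE; case: eqP => [->|]; rewrite ?(negbTE iNS).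
Qed.

Lemma subfun_restr_Ess f g d0 : subfun f g -> exists d, g = restr f (~: Ess g) d.
Proof.
case/(subfun_exists_restr d0) => S [d gE]; exists d.
have SNE : S \subset ~: Ess g.
  by rewrite subsetC gE; apply: subset_trans (Ess_restr _ _ _) (subsetDr _ _).
have -> : ~: Ess g = S :|: (~: Ess g :\: S).
  by apply/setP => j; rewrite !inE; case: (boolP (j \in S)) => // /(subsetP SNE); rewrite !inE => ->.
by rewrite -restr_comp -gE restr_id // subsetDl.
Qed.

End Restriction.

Theorem lemma4 (k n : nat) (hk : 2 <= k) (f : fn k n) (N : {set 'I_n})
  (m : nat) (x : 'I_m -> 'I_n) (c : 'I_m -> 'I_k) :
  separable f N ->
  (forall i, x i \in Ess f) ->
  (forall i, N :&: Ess (assign f (x i) (c i)) = set0) ->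
  forall M : {set 'I_n}, M != set0 -> M \subset [set x i | i : 'I_m] ->
    separable f (M :|: N).
Proof.
move=> [N0 [_ [g [fg Ng]]]] _ NEc M M0 MX.
have [d gE] := subfun_restr_Ess [ffun=> Ordinal (ltnW hk)] fg.
rewrite -Ng in gE.
set g' := restr f (~: (M :|: N)) d.
have g'g : restr g' (M :\: N) d = g.
  rewrite restr_comp gE; congr restr; apply/setP => j; rewrite !inE.
  by case: (j \in M); case: (j \in N).
have NE' : N \subset Ess g' by rewrite Ng -g'g Ess_restr_sub.
have E'MN : Ess g' \subset M :|: N.
  by apply: subset_trans (Ess_restr _ _ _) _; rewrite setDE setCK subsetIr.
have ME' : M \subset Ess g'.
  apply/subsetP => y yM; have [yN | yNN] := boolP (y \in N); first exact: subsetP NE' y yN.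
  have /imsetP[i _ yE] := subsetP MX y yM; subst y.
  apply/negPn/negP => xNE.
  have : N \subset Ess (assign f (x i) (c i)).
    rewrite Ng -g'g -(assign_id (c i) xNE) assign_restr; last by rewrite !inE yM.
    by rewrite restr_comp Ess_restr_sub.
  by move/setIidPl; rewrite NEc => N0'; move: N0; rewrite -N0' eqxx.
have Eg' : Ess g' = M :|: N by apply/eqP; rewrite eqEsubset E'MN subUset ME' NE'.
split; first by rewrite setU_eq0 negb_and M0.
split; last by exists g'; split; [exact: subfun_restr | ].
by rewrite -Eg' Ess_restr_sub.
Qed.
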